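(* Let $\mathfrak b$ be an infinite cardinal and consider a nonstandard analysis which is $\mathfrak b$-confined, $\mathfrak b^+$-saturated, $(2^{\mathfrak b})^+$-saturated inside every set of cardinality $\le\mathfrak b$, and such that $|{}^*B|=2^{2^{\mathfrak b}}$ whenever $|B|=\mathfrak b$. Let $B$ be a set with $|B|=\mathfrak b$. Then: (i) For every internal subset $\beta\subseteq{}^*B$ containing $\nu(b)$ for all $b\in B$, and every ultrafilter $\mathcal U$ on $B$, there is $x\in\beta$ with $x\in{}^*S$ for all $S\in\mathcal U$. Consequently $|\beta|=2^{2^{\mathfrak b}}$. (ii) If $\alpha\subseteq{}^*A$ is internal ($A$ any set), then either $\alpha$ is finite or there exist an internal $\beta\subseteq{}^*B$ as in (i) and an injective map $\beta\to\alpha$ whose graph is an internal subset of ${}^*(B\times A)$; in the latter case $|\alpha|\ge2^{2^{\mathfrak b}}$. (iii) If $\alpha$ is the set of ${}^*$-members of some element of ${}^*\mathcal S$, where $\mathcal S$ is a family of finite subsets of a set $A$ (i.e. $\alpha=\{y\in{}^*A:(y,X)\in{}^*(\in_A)\}$ with $X\in{}^*\mathcal S$), then $|\alpha|$ is either finite or equal to $2^{2^{\mathfrak b}}$.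
   Context: A nonstandard analysis is a functor ${}^*:\mathbf{Set}\to\mathbf{Set}$ (images ${}^*A$, ${}^*f$) which (i) maps the full subcategory of finite sets into itself as a self-equivalence and (ii) preserves finite products and equalizers; for $E\subseteq A$, ${}^*E\subseteq{}^*A$, and ${}^*(A\times C)={}^*A\times{}^*C$. For every $a$, ${}^*\{a\}$ is a singleton $\{\nu(a)\}$, giving an injection $\nu:A\to{}^*A$. $x\in{}^*A$ is $\mathfrak m$-confined if $x\in{}^*A'$ for some $A'\subseteq A$, $|A'|\le\mathfrak m$; the analysis is $\mathfrak m$-confined if all elements of all ${}^*A$ are. A subset of ${}^*A$ is internal if it equals $\{y\in{}^*A:(y,X)\in{}^*(\in_A)\}$ for some $X\in{}^*(\mathcal PA)$, where $\in_A\subseteq A\times\mathcal PA$ is the membership relation. The analysis is $\mathfrak m$-saturated inside $A$ if every family of fewer than $\mathfrak m$ internal subsets of ${}^*A$ with the finite intersection property has nonempty intersection; $\mathfrak m$-saturated if this holds inside every set. *)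

(* Sets are modelled by Rocq types, subsets by predicates. *)
From Stdlib Require Import List Classical.
Set Implicit Arguments.

Definition injective {A B : Type} (f : A -> B) := forall x y, f x = f y -> x = y.
Definition surjective {A B : Type} (f : A -> B) := forall y, exists x, f x = y.
Definition bijective {A B : Type} (f : A -> B) := injective f /\ surjective f.

Definition fin (A : Type) : Prop := exists l : list A, forall x, In x l.
Definition card_le (A B : Type) : Prop := exists f : A -> B, injective f.
Definition card_eq (A B : Type) : Prop := exists f : A -> B, bijective f.

(* A nonstandard analysis: a functor * : Set -> Set which restricts to a
   self-equivalence of the full subcategory of finite sets and preserves
   finite products (terminal object + binary products) and equalizers. *)
Record NSA := {
  star : Type -> Type;
  smap : forall {A B : Type}, (A -> B) -> star A -> star B;
  smap_id : forall (A : Type) (x : star A), smap (fun a => a) x = x;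
  smap_comp : forall (A B C : Type) (f : A -> B) (g : B -> C) (x : star A),
      smap g (smap f x) = smap (fun a => g (f a)) x;
  star_fin : forall A : Type, fin A -> fin (star A);
  star_faithful : forall (A B : Type) (f g : A -> B), fin A -> fin B ->
      (forall x, smap f x = smap g x) -> forall a, f a = g a;
  star_full : forall (A B : Type) (h : star A -> star B), fin A -> fin B ->
      exists f : A -> B, forall x, smap f x = h x;
  star_ess_surj : forall C : Type, fin C -> exists A : Type, fin A /\ card_eq (star A) C;
  star_pt : star unit;
  star_pt_uniq : forall x : star unit, x = star_pt;
  star_prod : forall A B : Type,
      bijective (fun z : star (A * B) => (smap fst z, smap snd z));
  star_eq_inj : forall (A B : Type) (f g : A -> B),
      injective (smap (@proj1_sig A (fun x => f x = g x)));
  star_eq_univ : forall (A B : Type) (f g : A -> B) (y : star A),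
      smap f y = smap g y ->
      exists z : star {x : A | f x = g x}, smap (@proj1_sig _ _) z = y
}.

Section Notions.
Variable N : NSA.

(* nu(a) : the unique element of *{a}, viewed inside *A *)
Definition nu {A : Type} (a : A) : star N A := smap N (fun _ : unit => a) (star_pt N).

Definition starsub {A : Type} (E : A -> Prop) : star N A -> Prop :=
  fun y => exists z : star N {a : A | E a}, smap N (@proj1_sig _ _) z = y.

Definition ElemRel (A : Type) := {p : A * (A -> Prop) | snd p (fst p)}.

(* (y, X) in *(in_A), via *(A x PA) = *A x *PA *)
Definition smem {A : Type} (y : star N A) (X : star N (A -> Prop)) : Prop :=
  exists z : star N (ElemRel A),
    smap N (fun p : ElemRel A => fst (proj1_sig p)) z = y /\
    smap N (fun p : ElemRel A => snd (proj1_sig p)) z = X.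

Definition members {A : Type} (X : star N (A -> Prop)) : star N A -> Prop :=
  fun y => smem y X.

Definition internal {A : Type} (S : star N A -> Prop) : Prop :=
  exists X : star N (A -> Prop), forall y, S y <-> smem y X.

(* m-confined with m = |B| *)
Definition confined (B : Type) : Prop :=
  forall (A : Type) (x : star N A), exists E : A -> Prop,
    card_le {a : A | E a} B /\ starsub E x.

(* saturation inside A for families indexed by sets I with |I| <= |C|,
   i.e. families of fewer than |C|^+ internal subsets *)
Definition FIP {A I : Type} (F : I -> star N A -> Prop) : Prop :=
  forall l : list I, exists y, forall i, In i l -> F i y.

Definition saturated_inside_le (C A : Type) : Prop :=
  forall (I : Type) (F : I -> star N A -> Prop),
    card_le I C -> (forall i, internal (F i)) -> FIP F ->
    exists y, forall i, F i y.

End Notions.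

Definition ultrafilter {B : Type} (U : (B -> Prop) -> Prop) : Prop :=
  U (fun _ => True) /\ ~ U (fun _ => False) /\
  (forall S T : B -> Prop, U S -> (forall b, S b -> T b) -> U T) /\
  (forall S T : B -> Prop, U S -> U T -> U (fun b => S b /\ T b)) /\
  (forall S : B -> Prop, U S \/ U (fun b => ~ S b)).

(* (i) Saturation over the sets [*S], [S] in an ultrafilter, realizes the ultrafilter inside
   [beta]; realizing instead each of the [2^2^b] Boolean patterns on a Hausdorff independent
   family of [2^b] subsets of [B] yields [2^2^b] distinct points of [beta], while
   [|beta| <= |*B| = 2^2^b].
   (ii) An infinite internal set [alpha] internally has at least [n] elements for every
   standard [n], so every finite set of standard points injects into it by a finite graph;
   saturation over the [b] conditions "[nu b] is in the domain" then gives an internal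
   injective graph whose domain [beta] contains all standard points, and (i) bounds
   [|alpha|] from below.
   (iii) By confinement, [X] lies in [*E] for a family [E] of at most [b] finite sets, whose
   union [U] has at most [b] elements; hence the members of [X] lie in [*U], which embeds
   in [*B]. *)

From Stdlib Require Import List Classical ClassicalEpsilon FunctionalExtensionality
  PropExtensionality ProofIrrelevance Arith Lia Cantor.
From mathcomp Require boolp classical_sets.
Import ListNotations.
Set Bullet Behavior "Strict Subproofs".

Definition dec (P : Prop) : {P} + {~ P} := excluded_middle_informative P.
Definition cid {A} {P : A -> Prop} (H : exists x, P x) : {x | P x} :=
  constructive_indefinite_description P H.

Lemma sig_eq {A} {P : A -> Prop} (x y : {a | P a}) : proj1_sig x = proj1_sig y -> x = y.
Proof. apply eq_sig_hprop; intros; apply proof_irrelevance. Qed.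

(** * Cardinal arithmetic *)

Lemma zorn_preorder {T : Type} (t0 : T) (R : T -> T -> Prop) :
  (forall t, R t t) -> (forall r s t, R r s -> R s t -> R r t) ->
  (forall C : T -> Prop, (forall s t, C s -> C t -> R s t \/ R t s) ->
     exists t, forall s, C s -> R s t) ->
  exists t, forall s, R t s -> R s t.
Proof.
  intros Rrefl Rtrans Rchain.
  set (Rb := fun s t => boolp.asbool (R s t)).
  assert (Rb_refl : forall t, Rb t t = true) by (intro t; apply boolp.asboolT, Rrefl).
  assert (Rb_trans : forall r s t, Rb r s = true -> Rb s t = true -> Rb r t = true).
  { intros r s t Hrs Hst; apply boolp.asboolT.
    exact (Rtrans r s t (boolp.asboolW Hrs) (boolp.asboolW Hst)). }
  assert (Rb_chain : forall C, classical_sets.total_on C (fun s t => Rb s t = true) ->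
                     exists t, forall s, C s -> Rb s t = true).
  { intros C HC. destruct (Rchain C) as [t Ht].
    - intros s u Cs Cu.
      destruct (HC s u Cs Cu) as [H|H]; [left|right]; exact (boolp.asboolW H).
    - exists t; intros s Cs; apply boolp.asboolT, Ht, Cs. }
  destruct (classical_sets.ZL_preorder t0 (R := Rb) Rb_refl Rb_trans Rb_chain) as [t Ht].
  exists t; intros s Hts. apply boolp.asboolW, Ht, boolp.asboolT, Hts.
Qed.

Lemma card_le_refl A : card_le A A.
Proof. exists (fun x => x); intros x y H; exact H. Qed.

Lemma card_le_trans A B C : card_le A B -> card_le B C -> card_le A C.
Proof. intros [f Hf] [g Hg]; exists (fun x => g (f x)); intros x y H; auto. Qed.

Lemma card_eq_refl A : card_eq A A.
Proof. exists (fun x => x); split; [intros x y H; exact H|intro y; exists y; reflexivity]. Qed.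

Lemma card_eq_le A C : card_eq A C -> card_le A C.
Proof. intros [f [Hf _]]; exists f; exact Hf. Qed.

Lemma card_le_sig {A} (P Q : A -> Prop) :
  (forall a, P a -> Q a) -> card_le {a | P a} {a | Q a}.
Proof.
  intro PQ. exists (fun x => exist Q (proj1_sig x) (PQ _ (proj2_sig x))).
  intros x y E; apply sig_eq; exact (f_equal (@proj1_sig _ _) E).
Qed.

Lemma card_le_proj1_sig {A} (P : A -> Prop) : card_le {a | P a} A.
Proof. exists (@proj1_sig _ _); intros x y; apply sig_eq. Qed.

Lemma fin_card_le A C : card_le A C -> fin C -> fin A.
Proof.
  intros [g Hg] [l Hl].
  set (pre := fun c => match dec (exists a, g a = c) with
                       | left H => [proj1_sig (cid H)] | right _ => [] end).
  exists (flat_map pre l). intro a. apply in_flat_map. exists (g a); split; auto.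
  unfold pre; destruct (dec _) as [H|H]; [|exfalso; eauto].
  left; apply Hg; exact (proj2_sig (cid H)).
Qed.

Section SchroederBernstein.
Variables (A C : Type) (f : A -> C) (g : C -> A).
Hypotheses (Hf : injective f) (Hg : injective g).

Fixpoint chain (n : nat) (a : A) : Prop :=
  match n with
  | 0 => ~ exists c, g c = a
  | S n => exists a', chain n a' /\ g (f a') = a
  end.

Definition ginv (a : A) : C :=
  match dec (exists c, g c = a) with left H => proj1_sig (cid H) | right _ => f a end.

Lemma ginv_spec a : (exists c, g c = a) -> g (ginv a) = a.
Proof.
  intro H; unfold ginv; destruct (dec _) as [H'|H']; [exact (proj2_sig (cid H'))|tauto].
Qed.

Definition csb_map a := if dec (exists n, chain n a) then f a else ginv a.

Lemma not_chain_in_range a : ~ (exists n, chain n a) -> exists c, g c = a.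
Proof. intro H; apply NNPP; intro H'; apply H; exists 0; exact H'. Qed.

Lemma csb_map_bijective : bijective csb_map.
Proof.
  split.
  - intros a1 a2; unfold csb_map.
    destruct (dec (exists n, chain n a1)) as [H1|H1];
      destruct (dec (exists n, chain n a2)) as [H2|H2]; intro E.
    + auto.
    + exfalso; apply H2; destruct H1 as [n Hn]; exists (S n), a1; split; auto.
      rewrite E; apply ginv_spec, not_chain_in_range; auto.
    + exfalso; apply H1; destruct H2 as [n Hn]; exists (S n), a2; split; auto.
      rewrite <- E; apply ginv_spec, not_chain_in_range; auto.
    + rewrite <- (ginv_spec a1 (not_chain_in_range _ H1)),
              <- (ginv_spec a2 (not_chain_in_range _ H2)), E; auto.
  - intro c. destruct (dec (exists n, chain n (g c))) as [[[|n] Hn]|H].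
    + exfalso; apply Hn; exists c; auto.
    + destruct Hn as [a' [Ha' E]]. exists a'. unfold csb_map.
      destruct (dec (exists n, chain n a')) as [_|H'];
        [apply Hg; auto|exfalso; apply H'; exists n; auto].
    + exists (g c); unfold csb_map; destruct (dec _) as [H'|_]; [tauto|].
      apply Hg, ginv_spec; exists c; auto.
Qed.
End SchroederBernstein.

Lemma card_le_antisym A C : card_le A C -> card_le C A -> card_eq A C.
Proof. intros [f Hf] [g Hg]; exists (@csb_map A C f g); apply csb_map_bijective; auto. Qed.

Section NatEmbedding.
Variable B : Type.
Hypothesis HB : ~ fin B.

Lemma exists_not_In (l : list B) : exists b, ~ In b l.
Proof.
  apply NNPP; intro H; apply HB; exists l.
  intro x; apply NNPP; intro H'; apply H; exists x; auto.
Qed.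

Definition fresh (l : list B) : B := proj1_sig (cid (exists_not_In l)).

Fixpoint fresh_list (n : nat) : list B :=
  match n with 0 => [] | S n => fresh (fresh_list n) :: fresh_list n end.

Lemma fresh_In m n : m < n -> In (fresh (fresh_list m)) (fresh_list n).
Proof.
  induction n; intro H; [lia|]. simpl.
  destruct (Nat.eq_dec m n); [left; subst; auto|right; apply IHn; lia].
Qed.

Lemma card_le_nat : card_le nat B.
Proof.
  exists (fun n => fresh (fresh_list n)).
  assert (K : forall m n, m < n -> fresh (fresh_list m) <> fresh (fresh_list n)).
  { intros m n H E. apply (proj2_sig (cid (exists_not_In (fresh_list n)))).
    fold (fresh (fresh_list n)); rewrite <- E; apply fresh_In; auto. }
  intros m n E. destruct (Nat.lt_trichotomy m n) as [H|[H|H]]; auto; exfalso.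
  - exact (K m n H E).
  - exact (K n m H (eq_sym E)).
Qed.
End NatEmbedding.

Section Comparability.
Variables A C : Type.

Definition partial_inj (p : A -> option C) :=
  forall a a' c, p a = Some c -> p a' = Some c -> a = a'.

Definition pinj := {p | partial_inj p}.

Definition pinj_le (s t : pinj) :=
  forall a c, proj1_sig s a = Some c -> proj1_sig t a = Some c.

Lemma pinj_chain_ub (K : pinj -> Prop) :
  (forall s t, K s -> K t -> pinj_le s t \/ pinj_le t s) ->
  exists t, forall s, K s -> pinj_le s t.
Proof.
  intros HK.
  set (q := fun a => match dec (exists c s, K s /\ proj1_sig s a = Some c) with
                     | left H => Some (proj1_sig (cid H)) | right _ => None end).
  assert (Hq : forall a c, q a = Some c -> exists s, K s /\ proj1_sig s a = Some c).
  { intros a c; unfold q; destruct (dec _) as [H|H]; intro E; [|discriminate].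
    injection E; intros <-; exact (proj2_sig (cid H)). }
  assert (qK : forall s a c, K s -> proj1_sig s a = Some c -> q a = Some c).
  { intros s a c Ks E. destruct (q a) as [c'|] eqn:Eq.
    - destruct (Hq _ _ Eq) as [s' [Ks' E']].
      destruct (HK s s' Ks Ks') as [H|H]; [rewrite (H _ _ E) in E'|rewrite (H _ _ E') in E];
        congruence.
    - unfold q in Eq; destruct (dec _) as [H|H]; [discriminate|].
      exfalso; apply H; exists c, s; auto. }
  assert (q_inj : partial_inj q).
  { intros a a' c E1 E2.
    destruct (Hq _ _ E1) as [s [Ks Es]], (Hq _ _ E2) as [s' [Ks' Es']].
    destruct (HK s s' Ks Ks') as [H|H].
    - apply (proj2_sig s' a a' c); auto.
    - apply (proj2_sig s a a' c); auto. }
  exists (exist _ q q_inj). intros s Ks a c E; eapply qK; eauto.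
Qed.

Lemma pinj_extend (s : pinj) a0 c0 :
  proj1_sig s a0 = None -> (forall a, proj1_sig s a <> Some c0) ->
  exists t, pinj_le s t /\ proj1_sig t a0 = Some c0.
Proof.
  destruct s as [p Hp]; simpl; intros Ha0 Hc0.
  set (p' := fun a => if dec (a = a0) then Some c0 else p a).
  assert (Hp' : partial_inj p').
  { intros a a' c E1 E2; unfold p' in *.
    destruct (dec (a = a0)), (dec (a' = a0)).
    - congruence.
    - exfalso; apply (Hc0 a'); congruence.
    - exfalso; apply (Hc0 a); congruence.
    - eapply Hp; eauto. }
  exists (exist _ p' Hp'). split.
  - intros a c E; simpl in *; unfold p'.
    destruct (dec (a = a0)); [subst; congruence|exact E].
  - simpl; unfold p'; destruct (dec (a0 = a0)); tauto.
Qed.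

Lemma card_le_total : card_le A C \/ card_le C A.
Proof.
  assert (t0 : pinj) by (exists (fun _ => None); intros a a' c H; discriminate).
  destruct (zorn_preorder t0 pinj_le) as [[p Hp] Hmax].
  - intros t a c; auto.
  - intros r s t H1 H2 a c H; auto.
  - exact pinj_chain_ub.
  - destruct (classic (forall a, exists c, p a = Some c)) as [Htot|[a0 Ha0]%not_all_ex_not].
    + left. exists (fun a => proj1_sig (cid (Htot a))). intros a a' E.
      apply (Hp a a' (proj1_sig (cid (Htot a)))); [exact (proj2_sig (cid (Htot a)))|].
      rewrite E; exact (proj2_sig (cid (Htot a'))).
    + destruct (classic (forall c, exists a, p a = Some c)) as [Hs|[c0 Hc0]%not_all_ex_not].
      * right. exists (fun c => proj1_sig (cid (Hs c))). intros c c' E.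
        generalize (proj2_sig (cid (Hs c))) (proj2_sig (cid (Hs c'))). rewrite E. congruence.
      * exfalso.
        assert (Na0 : p a0 = None) by (destruct (p a0); [exfalso; eauto|reflexivity]).
        destruct (pinj_extend (exist _ p Hp) a0 c0 Na0) as [t [Hle Ht]];
          [intros a E; eauto|].
        pose proof (Hmax t Hle a0 c0 Ht) as E; simpl in E; congruence.
Qed.
End Comparability.

(** * Hessenberg's theorem and independent families *)

Lemma inj_on_extend {A C} (X : A -> Prop) (Y : C -> Prop) (j : {a | X a} -> {c | Y c}) :
  injective j -> inhabited C ->
  exists g : A -> C, (forall a, X a -> Y (g a)) /\
                     (forall a a', X a -> X a' -> g a = g a' -> a = a').
Proof.
  intros Hj [c0].
  exists (fun a => match dec (X a) with left H => proj1_sig (j (exist _ a H)) | right _ => c0 end).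
  split.
  - intros a Ha; destruct (dec (X a)); [exact (proj2_sig (j _))|tauto].
  - intros a a' Ha Ha' E; destruct (dec (X a)), (dec (X a')); try tauto.
    apply sig_eq, Hj in E. exact (f_equal (@proj1_sig _ _) E).
Qed.

Lemma inj_on_left_inverse {A C} (X : A -> Prop) (g : A -> C) (a0 : A) :
  (forall a a', X a -> X a' -> g a = g a' -> a = a') ->
  exists h : C -> A, forall a, X a -> h (g a) = a.
Proof.
  intro Hg.
  exists (fun c => match dec (exists a, X a /\ g a = c) with
                   | left H => proj1_sig (cid H) | right _ => a0 end).
  intros a Ha. destruct (dec _) as [H|H]; [|exfalso; eauto].
  destruct (proj2_sig (cid H)) as [Ha' E]; apply Hg; auto.
Qed.

Section Square.
Variable B : Type.
Variable io : nat -> B.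
Hypothesis io_inj : injective io.

(* Partial approximations to an injection [B * B -> B], ordered by extension. *)
Record sqstruct := SqStruct {
  sq_dom : B -> Prop;
  sq_fun : B * B -> B;
  sq_nat : forall n, sq_dom (io n);
  sq_closed : forall p, sq_dom (fst p) -> sq_dom (snd p) -> sq_dom (sq_fun p);
  sq_inj : forall p q, sq_dom (fst p) -> sq_dom (snd p) -> sq_dom (fst q) -> sq_dom (snd q) ->
           sq_fun p = sq_fun q -> p = q
}.

Definition sq_le (s t : sqstruct) :=
  (forall b, sq_dom s b -> sq_dom t b) /\
  (forall p, sq_dom s (fst p) -> sq_dom s (snd p) -> sq_fun s p = sq_fun t p).

Lemma sq_inhabited : inhabited sqstruct.
Proof.
  destruct (inj_on_left_inverse (fun _ => True) io 0) as [ioinv Hinv]; [auto|].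
  constructor; refine (SqStruct (fun b => exists n, io n = b)
            (fun p => io (to_nat (ioinv (fst p), ioinv (snd p)))) _ _ _).
  - intro n; exists n; auto.
  - intros; eexists; eauto.
  - intros [p1 p2] [q1 q2]; cbn [fst snd]; intros [n1 <-] [n2 <-] [m1 <-] [m2 <-] E.
    apply io_inj in E; apply (f_equal of_nat) in E. rewrite !cancel_of_to, !Hinv in E by auto.
    injection E; intros -> ->; auto.
Qed.

Lemma sq_chain_ub (K : sqstruct -> Prop) :
  (forall s t, K s -> K t -> sq_le s t \/ sq_le t s) -> exists t, forall s, K s -> sq_le s t.
Proof.
  intro HK. destruct (classic (exists s, K s)) as [[s0 Ks0]|Hne].
  2:{ destruct sq_inhabited as [t]; exists t; intros s Ks; exfalso; eauto. }
  set (X := fun b => exists s, K s /\ sq_dom s b).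
  set (f := fun p => match dec (exists s, K s /\ sq_dom s (fst p) /\ sq_dom s (snd p)) with
                     | left H => sq_fun (proj1_sig (cid H)) p | right _ => io 0 end).
  assert (Hf : forall s p, K s -> sq_dom s (fst p) -> sq_dom s (snd p) -> f p = sq_fun s p).
  { intros s p Ks H1 H2; unfold f; destruct (dec _) as [H|H]; [|exfalso; apply H; eauto].
    destruct (proj2_sig (cid H)) as [Ks' [H1' H2']].
    destruct (HK s _ Ks Ks') as [[_ R]|[_ R]]; [symmetry|]; auto. }
  assert (common : forall l, (forall b, In b l -> X b) ->
            exists s, K s /\ forall b, In b l -> sq_dom s b).
  { induction l as [|b l IH]; intro Hl.
    - exists s0; split; [auto|intros b []].
    - destruct (Hl b (or_introl eq_refl)) as [s [Ks Hs]].
      destruct IH as [s' [Ks' Hs']]; [intros c Hc; apply Hl; right; auto|].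
      destruct (HK s s' Ks Ks') as [[R _]|[R _]];
        [exists s'|exists s]; split; auto; intros c [<-|Hc]; auto. }
  assert (nat_X : forall n, X (io n)) by (intro n; exists s0; split; [auto|apply sq_nat]).
  assert (closed_X : forall p, X (fst p) -> X (snd p) -> X (f p)).
  { intros p H1 H2. destruct (common [fst p; snd p]) as [s [Ks Hs]];
      [intros b [<-|[<-|[]]]; auto|].
    exists s; split; auto.
    rewrite (Hf s); auto with datatypes. apply sq_closed; auto with datatypes. }
  assert (inj_X : forall p q, X (fst p) -> X (snd p) -> X (fst q) -> X (snd q) ->
                  f p = f q -> p = q).
  { intros p q H1 H2 H3 H4 E.
    destruct (common [fst p; snd p; fst q; snd q]) as [s [Ks Hs]];
      [intros b [<-|[<-|[<-|[<-|[]]]]]; auto|].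
    rewrite (Hf s p), (Hf s q) in E; auto with datatypes.
    apply (sq_inj s); auto with datatypes. }
  exists (SqStruct X f nat_X closed_X inj_X). intros s Ks; split; simpl.
  - intros b Hb; exists s; auto.
  - intros p H1 H2; symmetry; apply Hf; auto.
Qed.

(* Tagging with [io 0] or [io 1] codes a second copy [Y] of the domain back into it. *)
Lemma sq_code (s : sqstruct) (Y : B -> Prop) (g : B -> B) :
  (forall b, Y b -> ~ sq_dom s b -> sq_dom s (g b)) ->
  (forall b c, Y b -> Y c -> ~ sq_dom s b -> ~ sq_dom s c -> g b = g c -> b = c) ->
  exists code : B -> B,
    (forall b, sq_dom s b \/ Y b -> sq_dom s (code b)) /\
    (forall b c, sq_dom s b \/ Y b -> sq_dom s c \/ Y c -> code b = code c -> b = c).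
Proof.
  intros gY g_inj.
  exists (fun b => if dec (sq_dom s b) then sq_fun s (io 0, b) else sq_fun s (io 1, g b)).
  assert (gX : forall b, sq_dom s b \/ Y b -> ~ sq_dom s b -> sq_dom s (g b))
    by (intros b [Hb|Hb] Nb; [tauto|auto]).
  split.
  - intros b Hb; destruct (dec (sq_dom s b)); apply sq_closed; simpl; auto using sq_nat.
  - assert (untag : forall i i' x x', sq_dom s x -> sq_dom s x' ->
              sq_fun s (io i, x) = sq_fun s (io i', x') -> i = i' /\ x = x').
    { intros i i' x x' Hx Hx' E; apply sq_inj in E; simpl; auto using sq_nat.
      injection E; intros E2 E1; apply io_inj in E1; auto. }
    intros b c Hb Hc E.
    destruct (dec (sq_dom s b)) as [Xb|Xb], (dec (sq_dom s c)) as [Xc|Xc];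
      apply untag in E as [Ei Ex]; auto; try discriminate.
    apply g_inj; auto; [destruct Hb|destruct Hc]; tauto.
Qed.

Lemma sq_extend (s : sqstruct) :
  card_le {b | sq_dom s b} {b | ~ sq_dom s b} ->
  exists t, sq_le s t /\ exists b, sq_dom t b /\ ~ sq_dom s b.
Proof.
  set (X := sq_dom s). intros [j Hj].
  destruct (inj_on_extend X (fun b => ~ X b) j) as [g [gX g_inj]];
    [auto|constructor; exact (io 0)|].
  destruct (inj_on_left_inverse X g (io 0) g_inj) as [h Hh].
  set (J := fun b => exists x, X x /\ g x = b).
  destruct (sq_code s J h) as [code [codeX code_inj]].
  { intros b [x [Hx <-]] _; rewrite Hh; auto. }
  { intros b c [x [Hx <-]] [y [Hy <-]] _ _ E; rewrite !Hh in E; subst; auto. }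
  set (X' := fun b => X b \/ J b).
  (* New pairs are coded into [X] and moved by [g] into the fresh copy [J]. *)
  set (f' := fun p => if dec (X (fst p) /\ X (snd p)) then sq_fun s p
                      else g (sq_fun s (code (fst p), code (snd p)))).
  assert (inX : forall p, X' (fst p) -> X' (snd p) -> X (sq_fun s (code (fst p), code (snd p)))).
  { intros p H1 H2; apply sq_closed; simpl; apply codeX; auto. }
  assert (nat_X' : forall n, X' (io n)) by (intro n; left; apply sq_nat).
  assert (closed_X' : forall p, X' (fst p) -> X' (snd p) -> X' (f' p)).
  { intros p H1 H2; unfold f'; destruct (dec _) as [[K1 K2]|K].
    - left; apply sq_closed; auto.
    - right; exists (sq_fun s (code (fst p), code (snd p))); split; [apply inX; auto|reflexivity]. }
  assert (inj_X' : forall p q, X' (fst p) -> X' (snd p) -> X' (fst q) -> X' (snd q) ->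
                   f' p = f' q -> p = q).
  { intros p q H1 H2 H3 H4 E; unfold f' in E.
    destruct (dec (X (fst p) /\ X (snd p))) as [[K1 K2]|K],
             (dec (X (fst q) /\ X (snd q))) as [[K3 K4]|K'].
    - apply (sq_inj s); auto.
    - exfalso; apply (gX _ (inX q H3 H4)); rewrite <- E; apply sq_closed; auto.
    - exfalso; apply (gX _ (inX p H1 H2)); rewrite E; apply sq_closed; auto.
    - apply g_inj, (sq_inj s) in E; simpl; try apply inX; try apply codeX; auto.
      injection E; intros E2 E1.
      destruct p, q; simpl in *; f_equal; apply code_inj; auto. }
  exists (SqStruct X' f' nat_X' closed_X' inj_X'). split; [split; simpl|].
  - intros b Hb; left; auto.
  - intros p H1 H2; unfold f'; destruct (dec _); tauto.
  - exists (g (io 0)); simpl; split.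
    + right; exists (io 0); split; [apply sq_nat|auto].
    + apply gX, sq_nat.
Qed.

Lemma sq_square (s : sqstruct) :
  card_le {b | ~ sq_dom s b} {b | sq_dom s b} -> card_le (B * B) B.
Proof.
  intros [j Hj].
  destruct (inj_on_extend (fun b => ~ sq_dom s b) (sq_dom s) j) as [g [gX g_inj]];
    [auto|constructor; exact (io 0)|].
  destruct (sq_code s (fun _ => True) g) as [code [codeX code_inj]]; auto.
  exists (fun p => sq_fun s (code (fst p), code (snd p))).
  intros [p1 p2] [q1 q2] E; apply (sq_inj s) in E; simpl; try apply codeX; auto.
  injection E; intros; f_equal; apply code_inj; auto.
Qed.
End Square.

(* Hessenberg: the domain of a Zorn-maximal approximation is at least as large as its
   complement. *)
Lemma card_le_square B : ~ fin B -> card_le (B * B) B.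
Proof.
  intro HB. destruct (card_le_nat B HB) as [io io_inj].
  destruct (sq_inhabited B io io_inj) as [s0].
  destruct (zorn_preorder s0 (sq_le B io)) as [s Hmax].
  - intro s; split; auto.
  - intros r s t [R1 R2] [S1 S2]; split; auto.
    intros p H1 H2; rewrite R2 by auto; apply S2; auto.
  - exact (sq_chain_ub B io io_inj).
  - destruct (card_le_total {b | sq_dom B io s b} {b | ~ sq_dom B io s b}) as [H|H].
    + exfalso. destruct (sq_extend B io io_inj s H) as [t [Hst [b [Htb Hsb]]]].
      apply Hsb, (Hmax t Hst); auto.
    + exact (sq_square B io io_inj s H).
Qed.

Lemma card_le_prod A A' C C' : card_le A A' -> card_le C C' -> card_le (A * C) (A' * C').
Proof.
  intros [f Hf] [g Hg]; exists (fun p => (f (fst p), g (snd p))).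
  intros [a c] [a' c'] E; simpl in E; injection E; intros; f_equal; auto.
Qed.

Lemma card_le_list A C : card_le A C -> card_le (list A) (list C).
Proof.
  intros [f Hf]; exists (map f).
  intro l; induction l as [|x l IH]; intros [|y l'] E; simpl in E; try discriminate; auto.
  injection E; intros E1 E2; f_equal; auto.
Qed.

Lemma card_le_option A C : card_le A C -> card_le (option A) (option C).
Proof.
  intros [f Hf]; exists (option_map f).
  intros [a|] [a'|] E; try discriminate; auto. injection E; intro; f_equal; auto.
Qed.

Lemma card_le_pow A C : inhabited A -> card_le A C -> card_le (A -> bool) (C -> bool).
Proof.
  intros [a0] [g Hg].
  destruct (inj_on_left_inverse (fun _ => True) g a0) as [h Hh]; [auto|].
  exists (fun u c => u (h c)). intros u v E.
  apply functional_extensionality; intro a.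
  rewrite <- (Hh a I); exact (f_equal (fun w => w (g a)) E).
Qed.

Lemma card_le_pred_pow A (P : (A -> Prop) -> Prop) : card_le {S | P S} (A -> bool).
Proof.
  exists (fun S a => if dec (proj1_sig S a) then true else false).
  intros [S HS] [T HT] E. apply sig_eq; simpl.
  apply functional_extensionality; intro a; apply propositional_extensionality.
  assert (Ea := f_equal (fun u => u a) E); simpl in Ea.
  destruct (dec (S a)), (dec (T a)); try discriminate; tauto.
Qed.

Lemma card_le_option_pow A : card_le (option (A -> bool)) (option A -> bool).
Proof.
  exists (fun o oa => match oa, o with
                      | None, None => true
                      | Some a, Some u => u a
                      | _, _ => false end).
  intros [u|] [v|] E; auto.
  - f_equal; apply functional_extensionality; intro a; exact (f_equal (fun w => w (Some a)) E).
  - discriminate (f_equal (fun w => w None) E).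
  - discriminate (f_equal (fun w => w None) E).
Qed.

Section Infinite.
Variable B : Type.
Hypothesis HB : ~ fin B.

Let io : nat -> B := proj1_sig (cid (card_le_nat B HB)).
Let io_inj : injective io := proj2_sig (cid (card_le_nat B HB)).
Let pair : B * B -> B := proj1_sig (cid (card_le_square B HB)).
Let pair_inj : injective pair := proj2_sig (cid (card_le_square B HB)).

Lemma card_le_bool : card_le bool B.
Proof.
  exists (fun b : bool => if b then io 1 else io 0).
  intros [|] [|] E; auto; apply io_inj in E; discriminate.
Qed.

Fixpoint list_code (l : list B) : B :=
  match l with [] => io 0 | x :: l => pair (x, list_code l) end.

Lemma card_le_list_self : card_le (list B) B.
Proof.
  exists (fun l => pair (io (length l), list_code l)).
  intros l l' E. apply pair_inj in E. injection E; intros E2 E1. apply io_inj in E1.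
  clear E; revert l' E1 E2.
  induction l as [|x l IH]; intros [|y l'] E1 E2; simpl in *; try discriminate; auto.
  apply pair_inj in E2; injection E2; intros; f_equal; auto.
Qed.

Lemma card_le_option_self : card_le (option B) B.
Proof.
  eapply card_le_trans; [|apply card_le_list_self].
  exists (fun o => match o with Some b => [b] | None => [] end).
  intros [a|] [a'|] E; try discriminate; auto; injection E; intros ->; auto.
Qed.

Lemma card_le_option_pow_self : card_le (option (B -> bool)) (B -> bool).
Proof.
  eapply card_le_trans; [apply card_le_option_pow|].
  apply card_le_pow; [constructor; exact None|apply card_le_option_self].
Qed.

Lemma separating_list_one (h : B -> bool) (l : list (B -> bool)) :
  exists F, forall h', In h' l -> h <> h' -> exists b, In b F /\ h b <> h' b.
Proof.
  induction l as [|h1 l [F HF]].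
  - exists []; intros h' [].
  - destruct (classic (h = h1)) as [<-|NE].
    + exists F; intros h' [<-|H]; [tauto|auto].
    + destruct (not_all_ex_not _ _ (fun H => NE (functional_extensionality _ _ H))) as [b Hb].
      exists (b :: F). intros h' [<-|H] Hn.
      * exists b; simpl; auto.
      * destruct (HF h' H Hn) as [c [Hc E]]; exists c; simpl; auto.
Qed.

Lemma separating_list (l : list (B -> bool)) :
  exists F, forall h h', In h l -> In h' l -> h <> h' -> map h F <> map h' F.
Proof.
  assert (K : exists F, forall h h', In h l -> In h' l -> h <> h' ->
                exists b, In b F /\ h b <> h' b).
  { induction l as [|h1 l [F HF]].
    - exists []; intros h h' [].
    - destruct (separating_list_one h1 l) as [G HG]. exists (F ++ G).
      intros h h' [<-|H] [<-|H'] Hn.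
      + tauto.
      + destruct (HG h' H' Hn) as [b [Hb E]]; exists b; split; [apply in_or_app|]; auto.
      + destruct (HG h H (fun E => Hn (eq_sym E))) as [b [Hb E]].
        exists b; split; [apply in_or_app|]; auto.
      + destruct (HF h h' H H' Hn) as [b [Hb E]]; exists b; split; [apply in_or_app|]; auto. }
  destruct K as [F HF]; exists F; intros h h' H H' Hn E.
  destruct (HF h h' H H' Hn) as [b [Hb Ehb]].
  exact (Ehb (proj1 map_ext_in_iff E b Hb)).
Qed.

(* Hausdorff's independent family.  The point realizing the pattern [s] on [l] codes a
   list [F] separating the members of [l], together with the traces on [F] of those
   members selected by [s]. *)
Lemma independent_family : exists S : (B -> bool) -> B -> Prop,
  forall (l : list (B -> bool)) (s : (B -> bool) -> bool),
    exists b, forall h, In h l -> (S h b <-> s h = true).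
Proof.
  assert (Hcode : card_le (list B * list (list bool)) B).
  { eapply card_le_trans; [apply card_le_prod|apply (card_le_square B HB)].
    - apply card_le_list_self.
    - eapply card_le_trans; [apply card_le_list|apply card_le_list_self].
      eapply card_le_trans; [apply card_le_list, card_le_bool|apply card_le_list_self]. }
  destruct Hcode as [code code_inj].
  exists (fun h b => exists F T, code (F, T) = b /\ In (map h F) T).
  intros l s. destruct (separating_list l) as [F HF].
  exists (code (F, map (fun h => map h F) (filter s l))). intros h Hh. split.
  - intros [F' [T [E Hin]]]. apply code_inj in E; injection E; intros -> ->.
    apply in_map_iff in Hin; destruct Hin as [h' [E' H']]. apply filter_In in H'.
    destruct (classic (h' = h)) as [<-|NE]; [tauto|].
    exfalso; apply (HF h' h); tauto.
  - intro H. exists F, (map (fun h => map h F) (filter s l)); split; auto.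
    apply in_map_iff; exists h; split; auto; apply filter_In; auto.
Qed.
End Infinite.

(** * Transfer *)

Lemma fin_lt n : fin {k | k < n}.
Proof.
  exists (flat_map (fun k => match dec (k < n) with
                             | left H => [exist _ k H] | right _ => [] end) (seq 0 n)).
  intros [k H]. apply in_flat_map. exists k; split; [apply in_seq; lia|].
  destruct (dec (k < n)); [left; apply sig_eq; auto|tauto].
Qed.

Section Transfer.
Variable N : NSA.
Local Notation st := (star N).
Local Notation sm := (smap N).
Local Notation ss := (starsub N).

Lemma smap_ext {A C} (f g : A -> C) x : (forall a, f a = g a) -> sm f x = sm g x.
Proof. intro H; replace g with f; auto; apply functional_extensionality; auto. Qed.

Lemma smap_compose {A C D} (f : C -> D) (g : A -> C) x : sm (fun a => f (g a)) x = sm f (sm g x).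
Proof. symmetry; apply smap_comp. Qed.

Lemma smap_const {A C} (c : C) (x : st A) : sm (fun _ => c) x = nu N c.
Proof. unfold nu. rewrite <- (star_pt_uniq N (sm (fun _ => tt) x)), smap_comp; auto. Qed.

Lemma smap_nu {A C} (f : A -> C) a : sm f (nu N a) = nu N (f a).
Proof. unfold nu; rewrite smap_comp; auto. Qed.

Lemma fin_unit : fin unit.
Proof. exists [tt]; intros []; simpl; auto. Qed.

Lemma fin_bool : fin bool.
Proof. exists [true; false]; intros []; simpl; auto. Qed.

Lemma star_empty {A} : (A -> False) -> st A -> False.
Proof.
  intros H x. assert (FA : fin A) by (exists []; intro a; destruct (H a)).
  destruct (star_full N (fun _ : st unit => x) fin_unit FA) as [f _]. exact (H (f tt)).
Qed.

Lemma star_fin_std {A} : fin A -> forall x : st A, exists a, x = nu N a.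
Proof.
  intros FA x. destruct (star_full N (fun _ : st unit => x) fin_unit FA) as [f Hf].
  exists (f tt). rewrite <- (Hf (star_pt N)). apply smap_ext. intros []; auto.
Qed.

Definition spair {A C} (y : st A) (c : st C) : st (A * C) :=
  proj1_sig (cid (proj2 (star_prod N A C) (y, c))).

Lemma smap_fst_spair {A C} (y : st A) (c : st C) : sm fst (spair y c) = y.
Proof. unfold spair; destruct (cid _) as [z Hz]; simpl; injection Hz; auto. Qed.

Lemma smap_snd_spair {A C} (y : st A) (c : st C) : sm snd (spair y c) = c.
Proof. unfold spair; destruct (cid _) as [z Hz]; simpl; injection Hz; auto. Qed.

Lemma spair_eta {A C} (w : st (A * C)) : w = spair (sm fst w) (sm snd w).
Proof.
  apply (proj1 (star_prod N A C)); simpl. rewrite smap_fst_spair, smap_snd_spair; auto.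
Qed.

Lemma smap_pair {A C D} (g1 : D -> A) (g2 : D -> C) z :
  sm (fun p => (g1 p, g2 p)) z = spair (sm g1 z) (sm g2 z).
Proof. rewrite (spair_eta (sm _ z)), <- !smap_compose; auto. Qed.

Lemma smap_fst_spair_comp {A C D} (h : A -> D) (u : st A) (v : st C) :
  sm (fun q => h (fst q)) (spair u v) = sm h u.
Proof. rewrite smap_compose, smap_fst_spair; auto. Qed.

Lemma smap_snd_spair_comp {A C D} (h : C -> D) (u : st A) (v : st C) :
  sm (fun q => h (snd q)) (spair u v) = sm h v.
Proof. rewrite smap_compose, smap_snd_spair; auto. Qed.

Lemma starsub_smap {A C} (Q : C -> Prop) (g : A -> C) (z : st A) :
  (forall a, Q (g a)) -> ss Q (sm g z).
Proof. intro H. exists (sm (fun a => exist Q (g a) (H a)) z). rewrite smap_comp; auto. Qed.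

Lemma starsub_image {A C} (P : A -> Prop) (Q : C -> Prop) (g : A -> C) (z : st A) :
  (forall a, P a -> Q (g a)) -> ss P z -> ss Q (sm g z).
Proof.
  intros H [w <-]. rewrite smap_comp. apply (starsub_smap Q (fun a => g (proj1_sig a))).
  intros [a Ha]; simpl; auto.
Qed.

Lemma starsub_mono {A} (P Q : A -> Prop) y : (forall a, P a -> Q a) -> ss P y -> ss Q y.
Proof. intros H K. rewrite <- (smap_id N A y). apply (starsub_image P); auto. Qed.

Lemma starsub_nu {A} (P : A -> Prop) a : P a -> ss P (nu N a).
Proof. intro H. apply (starsub_smap P (fun _ => a)); auto. Qed.

Lemma starsub_of_smap_eq {A C} (f g : A -> C) z :
  sm f z = sm g z -> ss (fun a => f a = g a) z.
Proof. intro E. destruct (star_eq_univ N f g z E) as [w Hw]. exists w; auto. Qed.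

Lemma smap_eq_of_starsub {A C} (P : A -> Prop) (f g : A -> C) z :
  (forall a, P a -> f a = g a) -> ss P z -> sm f z = sm g z.
Proof.
  intros H [w <-]. rewrite !smap_comp. apply smap_ext. intros [a Ha]; simpl; auto.
Qed.

Lemma starsub_preimage {A C} (Q : C -> Prop) (g : A -> C) (z : st A) :
  ss Q (sm g z) <-> ss (fun a => Q (g a)) z.
Proof.
  split; [|apply starsub_image; auto].
  intros [w Hw]. set (u := spair z w).
  assert (E : sm (fun p => g (fst p)) u = sm (fun p => proj1_sig (snd p)) u).
  { unfold u. rewrite smap_fst_spair_comp, smap_snd_spair_comp; auto. }
  destruct (star_eq_univ N _ _ u E) as [v Hv].
  assert (k : forall p : {p : A * {c | Q c} | g (fst p) = proj1_sig (snd p)},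
             Q (g (fst (proj1_sig p)))).
  { intros [[a [c Hc]] Hp]; simpl in *; rewrite Hp; auto. }
  exists (sm (fun p => exist (fun a => Q (g a)) (fst (proj1_sig p)) (k p)) v).
  rewrite smap_comp. simpl. rewrite smap_compose, Hv. apply smap_fst_spair.
Qed.

Lemma starsub_and {A} (P Q : A -> Prop) y : ss P y -> ss Q y -> ss (fun a => P a /\ Q a) y.
Proof.
  intros [z <-] HQ. apply (starsub_preimage Q (@proj1_sig _ _) z) in HQ.
  exact (starsub_image _ _ _ _ (fun a (H : Q (proj1_sig a)) => conj (proj2_sig a) H) HQ).
Qed.

Lemma starsub_empty {A} (P : A -> Prop) y : (forall a, ~ P a) -> ss P y -> False.
Proof. intros H [z _]. exact (star_empty (fun a => H (proj1_sig a) (proj2_sig a)) z). Qed.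

Lemma starsub_or_not {A} (P : A -> Prop) y : ss P y \/ ss (fun a => ~ P a) y.
Proof.
  set (chi := fun a => if dec (P a) then true else false).
  destruct (star_fin_std fin_bool (sm chi y)) as [[|] E];
    rewrite <- (smap_const _ y) in E; apply starsub_of_smap_eq in E; [left|right];
    revert E; apply starsub_mono; unfold chi; intro a; destruct (dec (P a)); auto; discriminate.
Qed.

Lemma starsub_choice {A C} (P : C -> Prop) (Q : A -> C -> Prop) x :
  (forall c, P c -> exists a, Q a c) -> ss P x ->
  exists y, ss (fun p => Q (fst p) (snd p)) (spair y x).
Proof.
  intros H [z <-].
  set (s := fun w : {c | P c} => cid (H (proj1_sig w) (proj2_sig w))).
  exists (sm (fun w => proj1_sig (s w)) z).
  rewrite <- smap_pair. apply starsub_smap. intro w; exact (proj2_sig (s w)).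
Qed.

Lemma starsub_lt_std (n : nat) z : ss (fun k => k < n) z -> exists k, k < n /\ z = nu N k.
Proof.
  intros [w <-]. destruct (star_fin_std (fin_lt n) w) as [[k H] ->].
  exists k; split; auto. rewrite smap_nu; auto.
Qed.

Lemma smem_starsub {A} (y : st A) (X : st (A -> Prop)) :
  smem N y X <-> ss (fun p : A * (A -> Prop) => snd p (fst p)) (spair y X).
Proof.
  split.
  - intros [z [E1 E2]]. exists z.
    rewrite (spair_eta (sm _ z)), !smap_comp, E1, E2; auto.
  - intros [z E]. exists z. split.
    + rewrite <- (smap_fst_spair y X), <- E, smap_comp; auto.
    + rewrite <- (smap_snd_spair y X), <- E, smap_comp; auto.
Qed.

Lemma smem_smap {A C} (Phi : C -> A -> Prop) (y : st A) (c : st C) :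
  smem N y (sm Phi c) <-> ss (fun p => Phi (snd p) (fst p)) (spair y c).
Proof.
  rewrite smem_starsub.
  replace (spair y (sm Phi c)) with (sm (fun p => (fst p, Phi (snd p))) (spair y c)).
  - rewrite starsub_preimage; simpl; tauto.
  - rewrite smap_pair, smap_fst_spair, smap_snd_spair_comp; auto.
Qed.

Lemma smem_nu {A} (S : A -> Prop) y : smem N y (nu N S) <-> ss S y.
Proof.
  rewrite smem_starsub.
  replace (spair y (nu N S)) with (sm (fun a => (a, S)) y).
  - rewrite starsub_preimage; simpl; tauto.
  - rewrite smap_pair, smap_id, smap_const; auto.
Qed.

Lemma internal_starsub {A} (S : A -> Prop) : internal N (ss S).
Proof. exists (nu N S); intro y; rewrite smem_nu; tauto. Qed.

Lemma smap_injective {A C} (f : A -> C) : injective f -> injective (sm f).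
Proof.
  intros Hf x y E.
  assert (K : ss (fun p => f (fst p) = f (snd p)) (spair x y)).
  { apply starsub_of_smap_eq. rewrite smap_fst_spair_comp, smap_snd_spair_comp; auto. }
  pose proof (smap_eq_of_starsub _ fst snd _ (fun p => Hf (fst p) (snd p)) K) as Exy.
  rewrite smap_fst_spair, smap_snd_spair in Exy; exact Exy.
Qed.

Definition srel {D A C} (R : D -> A -> C -> Prop) (d : st D) (x : st A) (y : st C) :=
  ss (fun t => R (snd t) (fst (fst t)) (snd (fst t))) (spair (spair x y) d).

Lemma smem_srel {D A C} (R : D -> A -> C -> Prop) d x y :
  smem N (spair x y) (sm (fun q p => R q (fst p) (snd p)) d) <-> srel R d x y.
Proof. rewrite smem_smap; tauto. Qed.

Lemma starsub_reindex {A C D} (Q : A * C -> Prop) (g1 : D -> A) (g2 : D -> C) z u v :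
  ss Q (spair u v) -> sm g1 z = u -> sm g2 z = v -> ss (fun q => Q (g1 q, g2 q)) z.
Proof.
  intros H E1 E2. apply (starsub_preimage Q (fun q => (g1 q, g2 q))).
  rewrite smap_pair, E1, E2; auto.
Qed.

Lemma srel_flip {D A C} (R : D -> A -> C -> Prop) d x y :
  srel R d x y -> srel (fun q c a => R q a c) d y x.
Proof.
  unfold srel; intro H.
  apply (starsub_reindex _ (fun t => (snd (fst t), fst (fst t))) snd _ _ _ H).
  - rewrite smap_pair, (smap_fst_spair_comp snd), (smap_fst_spair_comp fst),
      smap_fst_spair, smap_snd_spair; auto.
  - apply smap_snd_spair.
Qed.

Lemma srel_functional {D A C} (P : D -> Prop) (R : D -> A -> C -> Prop) d x y y' :
  (forall q a c c', P q -> R q a c -> R q a c' -> c = c') ->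
  ss P d -> srel R d x y -> srel R d x y' -> y = y'.
Proof.
  intros HR Hd H1 H2.
  set (w := spair (spair x (spair y y')) d).
  assert (Ex : sm (fun t => fst (fst t)) w = x)
    by (unfold w; rewrite (smap_fst_spair_comp fst), smap_fst_spair; auto).
  assert (Ey : sm (fun t => fst (snd (fst t))) w = y)
    by (unfold w; rewrite (smap_fst_spair_comp (fun u => fst (snd u))), (smap_snd_spair_comp fst),
          smap_fst_spair; auto).
  assert (Ey' : sm (fun t => snd (snd (fst t))) w = y')
    by (unfold w; rewrite (smap_fst_spair_comp (fun u => snd (snd u))), (smap_snd_spair_comp snd),
          smap_snd_spair; auto).
  assert (Ed : sm snd w = d) by apply smap_snd_spair.
  assert (K1 := starsub_reindex _ (fun t => (fst (fst t), fst (snd (fst t)))) snd w _ _ H1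
                  ltac:(rewrite smap_pair, Ex, Ey; auto) Ed).
  assert (K2 := starsub_reindex _ (fun t => (fst (fst t), snd (snd (fst t)))) snd w _ _ H2
                  ltac:(rewrite smap_pair, Ex, Ey'; auto) Ed).
  assert (K3 : ss (fun t => P (snd t)) w) by (apply starsub_preimage; rewrite Ed; auto).
  rewrite <- Ey, <- Ey'.
  apply (smap_eq_of_starsub (fun t => (R (snd t) (fst (fst t)) (fst (snd (fst t))) /\
                                       R (snd t) (fst (fst t)) (snd (snd (fst t)))) /\ P (snd t))).
  - intros t [[R1 R2] Pt]; eapply HR; eauto.
  - repeat apply starsub_and; auto.
Qed.

Lemma srel_total {D A C} (P : D -> Prop) (Dm : D -> A -> Prop) (R : D -> A -> C -> Prop) d x :
  (forall q a, P q -> Dm q a -> exists c, R q a c) ->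
  ss P d -> smem N x (sm Dm d) -> exists y, srel R d x y.
Proof.
  intros HR Hd Hx. rewrite smem_smap in Hx.
  assert (Hd' : ss (fun t => P (snd t)) (spair x d))
    by (apply starsub_preimage; rewrite smap_snd_spair; auto).
  destruct (starsub_choice (fun t => Dm (snd t) (fst t) /\ P (snd t))
              (fun c t => R (snd t) (fst t) c) _
              (fun t K => HR _ _ (proj2 K) (proj1 K)) (starsub_and _ _ _ Hx Hd')) as [y Hy].
  exists y.
  apply (starsub_reindex _ (fun t => snd (fst t)) (fun t => (fst (fst t), snd t)) _ _ _ Hy).
  - rewrite (smap_fst_spair_comp snd), smap_snd_spair; auto.
  - rewrite smap_pair, (smap_fst_spair_comp fst), smap_fst_spair, smap_snd_spair; auto.
Qed.

Lemma srel_range {D A C} (P : D -> Prop) (R : D -> A -> C -> Prop)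
    (Dm : D -> A -> Prop) (Rn : D -> C -> Prop) d x y :
  (forall q a c, P q -> R q a c -> Dm q a /\ Rn q c) ->
  ss P d -> srel R d x y -> smem N x (sm Dm d) /\ smem N y (sm Rn d).
Proof.
  intros HR Hd H. rewrite !smem_smap.
  assert (Hd' : ss (fun t => P (snd t)) (spair (spair x y) d))
    by (apply starsub_preimage; rewrite smap_snd_spair; auto).
  assert (S := starsub_and _ _ _ H Hd').
  split.
  - replace (spair x d) with (sm (fun t => (fst (fst t), snd t)) (spair (spair x y) d))
      by (rewrite smap_pair, (smap_fst_spair_comp fst), !smap_fst_spair, smap_snd_spair; auto).
    revert S; apply starsub_image. intros t [K Ht]; exact (proj1 (HR _ _ _ Ht K)).
  - replace (spair y d) with (sm (fun t => (snd (fst t), snd t)) (spair (spair x y) d))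
      by (rewrite smap_pair, (smap_fst_spair_comp snd), !smap_snd_spair; auto).
    revert S; apply starsub_image. intros t [K Ht]; exact (proj2 (HR _ _ _ Ht K)).
Qed.
End Transfer.

(** * Infinite internal sets *)

Definition atleast {A} (n : nat) (Y : A -> Prop) :=
  exists l : list A, length l = n /\ NoDup l /\ forall a, In a l -> Y a.

Lemma cover_of_not_atleast {A} n (Y : A -> Prop) :
  ~ atleast n Y -> exists l, length l < n /\ forall a, Y a -> In a l.
Proof.
  intro H.
  assert (K : forall k, atleast k Y \/ exists l, length l < k /\ forall a, Y a -> In a l).
  { induction k as [|k [[l [L [ND S]]]|[l [L S]]]].
    - left; exists []; repeat split; [constructor|intros a []].
    - destruct (classic (forall a, Y a -> In a l)) as [Hc|[a Ha]%not_all_ex_not].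
      + right; exists l; split; [lia|auto].
      + left; exists (a :: l); simpl; repeat split.
        * auto.
        * constructor; tauto.
        * intros b [<-|Hb]; [tauto|auto].
    - right; exists l; split; [lia|auto]. }
  destruct (K n); tauto.
Qed.

Definition cover {A} (n : nat) (Y : A -> Prop) : list A :=
  match dec (~ atleast n Y) with
  | left H => proj1_sig (cid (cover_of_not_atleast n Y H)) | right _ => [] end.

Lemma cover_spec {A} n (Y : A -> Prop) :
  ~ atleast n Y -> length (cover n Y) < n /\ forall a, Y a -> In a (cover n Y).
Proof.
  intro H; unfold cover; destruct (dec _) as [H'|H'];
    [exact (proj2_sig (cid (cover_of_not_atleast n Y H')))|tauto].
Qed.

(* Otherwise the position in a covering list of length [< n] would inject the members
   of [X] into [{k | k < n}]. *)
Lemma starsub_atleast N {A} (X : star N (A -> Prop)) :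
  ~ fin {y | smem N y X} -> forall n, starsub N (atleast n) X.
Proof.
  intros Hinf n. destruct (starsub_or_not N (atleast n) X) as [H|H]; auto. exfalso.
  set (R := fun (Y : A -> Prop) a k => Y a /\ nth_error (cover n Y) k = Some a).
  assert (Htot : forall y, smem N y X -> exists z, srel N R X y z).
  { intros y Hy. apply (srel_total N (fun Y => ~ atleast n Y) (fun Y a => Y a)); auto.
    - intros Y a HY Ha. destruct (In_nth_error _ _ (proj2 (cover_spec n Y HY) a Ha)) as [k Hk].
      exists k; split; auto.
    - rewrite smap_id; auto. }
  assert (Hstd : forall y z, srel N R X y z -> exists k, k < n /\ z = nu N k).
  { intros y z Hz. apply starsub_lt_std.
    destruct (srel_range N (fun Y => ~ atleast n Y) R (fun Y a => Y a) (fun _ k => k < n)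
                X y z) as [_ Hk]; auto.
    - intros Y a k HY [Ha Hk]. split; auto.
      apply Nat.lt_le_trans with (length (cover n Y)).
      + apply nth_error_Some; congruence.
      + apply Nat.lt_le_incl, cover_spec, HY.
    - rewrite smap_const, smem_nu in Hk; exact Hk. }
  apply Hinf, (fin_card_le _ {k | k < n}); [|apply fin_lt].
  assert (Hk : forall y : {y | smem N y X}, exists k, k < n /\ srel N R X (proj1_sig y) (nu N k)).
  { intros [y Hy]. destruct (Htot y Hy) as [z Hz]. destruct (Hstd y z Hz) as [k [Hk ->]].
    exists k; auto. }
  exists (fun y => exist _ (proj1_sig (cid (Hk y))) (proj1 (proj2_sig (cid (Hk y))))).
  intros y y' E. apply sig_eq.
  apply (f_equal (@proj1_sig _ _)) in E; simpl in E.
  destruct (proj2_sig (cid (Hk y))) as [_ H1], (proj2_sig (cid (Hk y'))) as [_ H2].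
  rewrite E in H1.
  apply (srel_functional N (fun Y => ~ atleast n Y) (fun Y k a => R Y a k) X
           (nu N (proj1_sig (cid (Hk y'))))); auto using srel_flip.
  intros Y k a a' _ [_ E1] [_ E2]; congruence.
Qed.

(** * Saturation over standard points *)

Lemma ultrafilter_list_inhabited {B} (U : (B -> Prop) -> Prop) :
  ultrafilter U -> forall l : list {S | U S}, exists b, forall S, In S l -> proj1_sig S b.
Proof.
  intros [Utrue [Ufalse [Umono [Uand _]]]] l.
  assert (Ul : U (fun b => forall S, In S l -> proj1_sig S b)).
  { induction l as [|[S HS] l IH].
    - apply (Umono (fun _ => True)); [auto|intros b _ S []].
    - apply (Umono _ _ (Uand _ _ HS IH)). intros b [Hb Hl] S' [<-|HS']; auto. }
  apply NNPP; intro H. apply Ufalse, (Umono _ _ Ul). intros b Hb; apply H; eauto.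
Qed.

Section StandardPoints.
Variable N : NSA.
Variable B : Type.
Hypothesis HB : ~ fin B.
Hypothesis Hsat : saturated_inside_le N (B -> bool) B.
Local Notation ss := (starsub N).

Lemma ultrafilter_realized (beta : star N B -> Prop) :
  internal N beta -> (forall b, beta (nu N b)) ->
  forall U, ultrafilter U -> exists x, beta x /\ forall S, U S -> ss S x.
Proof.
  intros Ibeta Hbeta U HU.
  set (F := fun i : option {S | U S} =>
              match i with None => beta | Some E => ss (proj1_sig E) end).
  destruct (Hsat _ F) as [x Hx].
  - eapply card_le_trans; [apply card_le_option, card_le_pred_pow|].
    apply card_le_option_pow_self, HB.
  - intros [S|]; [apply internal_starsub|exact Ibeta].
  - intro l. destruct (ultrafilter_list_inhabited U HU
      (flat_map (fun i => match i with Some E => [E] | None => [] end) l)) as [b Hb].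
    exists (nu N b). intros [S|] Hi; simpl; auto.
    apply starsub_nu, Hb, in_flat_map. exists (Some S); simpl; auto.
  - exists x; split; [exact (Hx None)|]. intros S HS; exact (Hx (Some (exist _ S HS))).
Qed.

Lemma card_le_internal_std (beta : star N B -> Prop) :
  internal N beta -> (forall b, beta (nu N b)) -> card_le ((B -> bool) -> bool) {x | beta x}.
Proof.
  intros Ibeta Hbeta. destruct (independent_family B HB) as [Ind HInd].
  assert (Hx : forall g : (B -> bool) -> bool, exists x, beta x /\
                 forall h, ss (fun b => Ind h b <-> g h = true) x).
  { intro g.
    set (F := fun i : option (B -> bool) => match i with
                | None => beta | Some h => ss (fun b => Ind h b <-> g h = true) end).
    destruct (Hsat _ F) as [x Hx].
    - apply card_le_option_pow_self, HB.
    - intros [h|]; [apply internal_starsub|exact Ibeta].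
    - intro l. destruct (HInd (flat_map (fun i => match i with Some h => [h] | None => [] end) l) g)
        as [b Hb].
      exists (nu N b). intros [h|] Hi; simpl; auto.
      apply starsub_nu, Hb, in_flat_map. exists (Some h); simpl; auto.
    - exists x; split; [exact (Hx None)|]. intro h; exact (Hx (Some h)). }
  exists (fun g => exist beta (proj1_sig (cid (Hx g))) (proj1 (proj2_sig (cid (Hx g))))).
  intros g g' E. apply (f_equal (@proj1_sig _ _)) in E; simpl in E.
  destruct (proj2_sig (cid (Hx g))) as [_ H1], (proj2_sig (cid (Hx g'))) as [_ H2].
  rewrite E in H1.
  apply functional_extensionality; intro h. apply NNPP; intro NE.
  refine (starsub_empty N _ _ _ (starsub_and N _ _ _ (H1 h) (H2 h))).
  intros b [K1 K2]; apply NE; destruct (g h), (g' h); auto; exfalso.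
  - assert (false = true) by tauto; discriminate.
  - assert (false = true) by tauto; discriminate.
Qed.
End StandardPoints.

(** * Internal injections *)

(* Bundling domain, graph and target lets a single element of [*(gdata B A)] describe an
   internal injection. *)
Record gdata (B A : Type) := GData {
  gdom : B -> Prop;
  grel : B -> A -> Prop;
  grng : A -> Prop
}.
Arguments GData {B A}.
Arguments gdom {B A}.
Arguments grel {B A}.
Arguments grng {B A}.

Record inj_graph {B A} (q : gdata B A) : Prop := {
  ig_range : forall b a, grel q b a -> gdom q b /\ grng q a;
  ig_total : forall b, gdom q b -> exists a, grel q b a;
  ig_functional : forall b a a', grel q b a -> grel q b a' -> a = a';
  ig_injective : forall b b' a, grel q b a -> grel q b' a -> b = b'
}.

Lemma finite_inj_graph {B A} (l : list B) (Y : A -> Prop) :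
  atleast (length l) Y ->
  exists q, inj_graph q /\ grng q = Y /\ forall b, In b l -> gdom q b.
Proof.
  revert Y; induction l as [|b l IH]; intros Y [la [L [ND HY]]].
  - exists (GData (fun _ => False) (fun _ _ => False) Y).
    split; [constructor|split]; simpl; tauto.
  - destruct la as [|a la]; [discriminate|]. injection L; intro L'.
    inversion ND as [|a0 la0 Na ND' E0]; subst.
    destruct (IH (fun x => Y x /\ x <> a)) as [q [Hq [Eq Hl]]].
    { exists la; repeat split; auto.
      - apply HY; simpl; auto.
      - intro E; subst; tauto. }
    exists (GData (fun x => (gdom q x /\ x <> b) \/ x = b)
                  (fun x y => (grel q x y /\ x <> b) \/ (x = b /\ y = a)) Y).
    assert (rng : forall x y, grel q x y -> gdom q x /\ Y y /\ y <> a)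
      by (intros x y Hxy; destruct (ig_range q Hq x y Hxy) as [H1 H2]; rewrite Eq in H2; tauto).
    split; [constructor|split; [reflexivity|]]; simpl.
    + intros x y [[Hr Nx]|[-> ->]].
      * apply rng in Hr; tauto.
      * split; [right; reflexivity|apply HY; simpl; auto].
    + intros x [[Hx Nx]| ->]; [|eauto].
      destruct (ig_total q Hq x Hx) as [y Hy]; eauto.
    + intros x y y' [[H1 N1]|[-> ->]] [[H2 N2]|[E2 ->]]; try tauto.
      eapply (ig_functional q Hq); eauto.
    + intros x x' y [[H1 N1]|[-> ->]] [[H2 N2]|[-> E2]]; auto.
      * eapply (ig_injective q Hq); eauto.
      * apply rng in H1; tauto.
      * apply rng in H2; tauto.
    + intros x [<-|Hx]; auto. destruct (classic (x = b)); auto.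
Qed.

Section InternalGraph.
Variable N : NSA.
Variables B A : Type.
Variable c : star N (gdata B A).
Hypothesis Hc : starsub N inj_graph c.
Hypothesis Hc_std : forall b, starsub N (fun q => gdom q b) c.

Definition idom (x : star N B) := smem N x (smap N gdom c).

Lemma idom_nu b : idom (nu N b).
Proof.
  unfold idom; rewrite smem_smap.
  replace (spair N (nu N b) c) with (smap N (fun q => (b, q)) c).
  - apply starsub_preimage; exact (Hc_std b).
  - rewrite smap_pair, smap_const, smap_id; auto.
Qed.

Lemma irel_total x : idom x -> exists y, srel N grel c x y.
Proof. apply (srel_total N inj_graph gdom); auto. exact (fun q b Hq => ig_total q Hq b). Qed.

Definition imap (x : {x | idom x}) : {y | smem N y (smap N grng c)}.
Proof.
  destruct x as [x Hx]. destruct (cid (irel_total x Hx)) as [y Hy].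
  exists y. apply (srel_range N inj_graph grel gdom grng c x y); auto.
  exact (fun q b a Hq => ig_range q Hq b a).
Defined.

Lemma imap_srel x : srel N grel c (proj1_sig x) (proj1_sig (imap x)).
Proof. destruct x as [x Hx]; simpl; destruct (cid _); auto. Qed.

Lemma imap_injective : injective imap.
Proof.
  intros x x' E. apply sig_eq.
  apply (srel_functional N inj_graph (fun q a b => grel q b a) c (proj1_sig (imap x)));
    [|auto|apply srel_flip, imap_srel|rewrite E; apply srel_flip, imap_srel].
  intros q a b b' Hq; apply (ig_injective q Hq).
Qed.

Lemma imap_graph_internal : internal N (fun z : star N (B * A) =>
  exists x : {x | idom x}, smap N fst z = proj1_sig x /\ smap N snd z = proj1_sig (imap x)).
Proof.
  exists (smap N (fun q p => grel q (fst p) (snd p)) c). intro z.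
  rewrite (spair_eta N z), smem_srel, smap_fst_spair, smap_snd_spair. split.
  - intros [x [-> ->]]; apply imap_srel.
  - intro H.
    destruct (srel_range N inj_graph grel gdom grng c _ _
                (fun q b a Hq => ig_range q Hq b a) Hc H) as [Hx _].
    exists (exist idom _ Hx); split; auto; simpl.
    apply (srel_functional N inj_graph grel c (smap N fst z)); auto.
    + exact (fun q b a a' Hq => ig_functional q Hq b a a').
    + exact (imap_srel (exist idom _ Hx)).
Qed.
End InternalGraph.

Section GraphExistence.
Variable N : NSA.
Variables B A : Type.
Hypothesis HB : ~ fin B.
Hypothesis Hsat : saturated_inside_le N B (gdata B A).
Variable X : star N (A -> Prop).
Hypothesis Hinf : ~ fin {y | smem N y X}.

Lemma internal_inj_graph_exists : exists c : star N (gdata B A),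
  starsub N inj_graph c /\ (forall b, starsub N (fun q => gdom q b) c) /\ smap N grng c = X.
Proof.
  set (Phi := fun b (Y : A -> Prop) (q : gdata B A) => inj_graph q /\ gdom q b /\ grng q = Y).
  destruct (Hsat B (fun b c => smem N c (smap N (Phi b) X)) (card_le_refl B)) as [c Hc].
  - intro b; exists (smap N (Phi b) X); tauto.
  - intro l. destruct (starsub_choice N (atleast (length l))
      (fun q Y => inj_graph q /\ grng q = Y /\ forall b, In b l -> gdom q b) X
      (finite_inj_graph l) (starsub_atleast N X Hinf (length l))) as [c Hc].
    exists c. intros b Hb. rewrite smem_smap. revert Hc; apply starsub_mono.
    intros p [Hq [E Hl]]; unfold Phi; auto.
  - exists c. assert (Hc' := fun b => proj1 (smem_smap N (Phi b) c X) (Hc b)).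
    destruct (exists_not_In B HB []) as [b0 _].
    split; [|split].
    + rewrite <- (smap_fst_spair N c X). refine (starsub_image N _ _ _ _ _ (Hc' b0)).
      intros p [Hq _]; exact Hq.
    + intro b. rewrite <- (smap_fst_spair N c X). refine (starsub_image N _ _ _ _ _ (Hc' b)).
      intros p [_ [Hb _]]; exact Hb.
    + pose proof (smap_eq_of_starsub N _ (fun p => grng (fst p)) snd _
                    (fun p (K : Phi b0 (snd p) (fst p)) => proj2 (proj2 K)) (Hc' b0)) as E.
      rewrite (smap_fst_spair_comp N grng), smap_snd_spair in E; exact E.
Qed.
End GraphExistence.

Lemma internal_embedding N B (HB : ~ fin B) (A : Type)
    (Hsat : saturated_inside_le N B (gdata B A))
    (alpha : star N A -> Prop) (X : star N (A -> Prop)) :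
  (forall y, alpha y <-> smem N y X) -> ~ fin {y | alpha y} ->
  exists (beta : star N B -> Prop) (f : {x | beta x} -> {y | alpha y}),
    internal N beta /\ (forall b, beta (nu N b)) /\ injective f /\
    internal N (fun z : star N (B * A) =>
      exists x : {x | beta x}, smap N fst z = proj1_sig x /\ smap N snd z = proj1_sig (f x)).
Proof.
  intros HX Hinf.
  assert (HinfX : ~ fin {y | smem N y X})
    by (intro F; apply Hinf, (fin_card_le _ _ (card_le_sig _ _ (fun y => proj1 (HX y))) F)).
  destruct (internal_inj_graph_exists N B A HB Hsat X HinfX) as [c [Hc [Hstd <-]]].
  set (f := fun x => exist alpha _ (proj2 (HX _) (proj2_sig (imap N B A c Hc x)))).
  exists (idom N B A c), f. split; [|split; [|split]].
  - exists (smap N gdom c); intro x; reflexivity.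
  - apply idom_nu, Hstd.
  - intros x x' E. apply (imap_injective N B A c Hc), sig_eq.
    exact (f_equal (@proj1_sig _ _) E).
  - exact (imap_graph_internal N B A c Hc).
Qed.

Lemma card_le_internal_infinite N B (HB : ~ fin B)
    (Hsat : forall A : Type, saturated_inside_le N B A)
    (HsatB : saturated_inside_le N (B -> bool) B)
    A (alpha : star N A -> Prop) :
  internal N alpha -> ~ fin {y | alpha y} -> card_le ((B -> bool) -> bool) {y | alpha y}.
Proof.
  intros [X HX] Hinf.
  destruct (internal_embedding N B HB A (Hsat _) alpha X HX Hinf)
    as [beta [f [Ibeta [Hbeta [Hf _]]]]].
  eapply card_le_trans; [apply (card_le_internal_std N B HB HsatB beta Ibeta Hbeta)|].
  exists f; exact Hf.
Qed.

(** * Confinement *)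

Lemma card_le_union_fin B (HB : ~ fin B) {A} (E : (A -> Prop) -> Prop) :
  card_le {S | E S} B -> (forall S, E S -> fin {a | S a}) ->
  card_le {a | exists S, E S /\ S a} B.
Proof.
  intros HE Hfin.
  set (enum := fun S : {S | E S} => map (@proj1_sig _ _) (proj1_sig (cid (Hfin _ (proj2_sig S))))).
  assert (Hpos : forall a : {a | exists S, E S /\ S a}, exists p : {S | E S} * nat,
            nth_error (enum (fst p)) (snd p) = Some (proj1_sig a)).
  { intros [a [S [ES Sa]]].
    assert (Ha : In a (enum (exist _ S ES))).
    { apply (in_map (@proj1_sig _ _) _ (exist _ a Sa)), (proj2_sig (cid (Hfin S ES))). }
    destruct (In_nth_error _ _ Ha) as [n Hn]. exists (exist _ S ES, n); auto. }
  eapply card_le_trans; [|apply (card_le_square B HB)].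
  eapply card_le_trans; [|apply (card_le_prod _ _ _ _ HE (card_le_nat B HB))].
  exists (fun a => proj1_sig (cid (Hpos a))). intros a a' Eq.
  pose proof (proj2_sig (cid (Hpos a))) as H1; pose proof (proj2_sig (cid (Hpos a'))) as H2.
  simpl in H1, H2; rewrite Eq, H2 in H1. injection H1; intro; apply sig_eq; auto.
Qed.

Lemma card_le_starsub N {A B} (U : A -> Prop) :
  card_le {a | U a} B -> card_le {y | starsub N U y} (star N B).
Proof.
  intros [u Hu].
  exists (fun y : {y | starsub N U y} => smap N u (proj1_sig (cid (proj2_sig y)))).
  intros [y Hy] [y' Hy'] E; simpl in E. apply (smap_injective N u Hu) in E.
  apply sig_eq; simpl.
  rewrite <- (proj2_sig (cid Hy)), <- (proj2_sig (cid Hy')), E; auto.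
Qed.

Lemma card_le_members_confined N B (HB : ~ fin B) (Hconf : confined N B)
    A (SS : (A -> Prop) -> Prop) (X : star N (A -> Prop)) :
  (forall E, SS E -> fin {a | E a}) -> starsub N SS X ->
  card_le {y | members N X y} (star N B).
Proof.
  intros HSS HX. destruct (Hconf _ X) as [E [HE HXE]].
  set (U := fun a => exists S, (E S /\ SS S) /\ S a).
  apply (card_le_trans _ {y | starsub N U y}).
  - apply card_le_sig. intros y Hy. unfold members in Hy; rewrite smem_starsub in Hy.
    assert (HXp : starsub N (fun p : A * (A -> Prop) => E (snd p) /\ SS (snd p)) (spair N y X))
      by (apply (starsub_preimage N (fun S => E S /\ SS S) snd); rewrite smap_snd_spair;
          apply starsub_and; auto).
    rewrite <- (smap_fst_spair N y X).
    refine (starsub_image N _ _ _ _ _ (starsub_and N _ _ _ Hy HXp)).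
    intros p [Hp HEp]; exists (snd p); auto.
  - apply card_le_starsub, card_le_union_fin; auto.
    + eapply card_le_trans; [|exact HE]. apply card_le_sig; tauto.
    + intros S [_ HS]; auto.
Qed.

Theorem mainTheorem12 (N : NSA) (B : Type) :
  ~ fin B ->
  confined N B ->
  (forall A : Type, saturated_inside_le N B A) ->
  (forall A : Type, card_le A B -> saturated_inside_le N (B -> bool) A) ->
  (forall B' : Type, card_eq B' B -> card_eq (star N B') ((B -> bool) -> bool)) ->
  (* (i) *)
  (forall beta : star N B -> Prop, internal N beta ->
     (forall b : B, beta (nu N b)) ->
     (forall U : (B -> Prop) -> Prop, ultrafilter U ->
        exists x, beta x /\ forall S, U S -> starsub N S x) /\
     card_eq {x | beta x} ((B -> bool) -> bool)) /\
  (* (ii) *)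
  (forall (A : Type) (alpha : star N A -> Prop), internal N alpha ->
     fin {y | alpha y} \/
     ((exists (beta : star N B -> Prop) (f : {x | beta x} -> {y | alpha y}),
         internal N beta /\ (forall b : B, beta (nu N b)) /\
         injective f /\
         internal N (fun z : star N (B * A) =>
            exists x : {x | beta x},
              smap N fst z = proj1_sig x /\ smap N snd z = proj1_sig (f x))) /\
      card_le ((B -> bool) -> bool) {y | alpha y})) /\
  (* (iii) *)
  (forall (A : Type) (SS : (A -> Prop) -> Prop),
     (forall E, SS E -> fin {a | E a}) ->
     forall X : star N (A -> Prop), starsub N SS X ->
       fin {y | members N X y} \/
       card_eq {y | members N X y} ((B -> bool) -> bool)).
Proof.
  intros HB Hconf Hsat Hsat2 Hcard.
  assert (HsatB : saturated_inside_le N (B -> bool) B) by (apply Hsat2, card_le_refl).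
  assert (HstarB : card_le (star N B) ((B -> bool) -> bool))
    by (apply card_eq_le, Hcard, card_eq_refl).
  split; [|split].
  - intros beta Ibeta Hbeta. split.
    + apply ultrafilter_realized; auto.
    + apply card_le_antisym; [|apply card_le_internal_std; auto].
      exact (card_le_trans _ _ _ (card_le_proj1_sig beta) HstarB).
  - intros A alpha Ialpha.
    destruct (classic (fin {y | alpha y})) as [F|Hinf]; [left; exact F|right].
    destruct Ialpha as [X HX].
    split; [apply (internal_embedding N B HB A (Hsat _) alpha X HX Hinf)|].
    apply (card_le_internal_infinite N B HB Hsat HsatB); [exists X|]; auto.
  - intros A SS HSS X HX.
    destruct (classic (fin {y | members N X y})) as [F|Hinf]; [left; exact F|right].
    apply card_le_antisym.
    + eapply card_le_trans; [apply (card_le_members_confined N B HB Hconf A SS X)|]; auto.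
    + apply (card_le_internal_infinite N B HB Hsat HsatB); auto.
      exists X; intro y; reflexivity.
Qed.
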